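(* Let $V$ be an $n$-dimensional vector space over a field $\mathbb{F}$ with an alternating bilinear form $\mathsf{s}$ of maximal rank. Then the symplectic group $\mathrm{Sp}(V)$ acts flag-transitively on $\Gamma(V)$.
   Context: $\mathrm{Sp}(V)$ is the group of linear automorphisms of $V$ preserving $\mathsf{s}$. $\mathrm{Rad}(U)=U\cap U^\perp$; maximal rank means $\dim\mathrm{Rad}(V)\le1$. $\Gamma(V)$: for $i\in I=\{1,\dots,n-1\}$ the objects of type $i$ are the $i$-dimensional subspaces $U$ with $U\cap\mathrm{Rad}(V)=0$ and $\dim\mathrm{Rad}(U)\le1$; $X,Y$ are incident iff $X=Y$, or $X\subseteq Y$ with $X\cap\mathrm{Rad}(Y)=0$, or vice versa. A flag is a set of pairwise incident objects, its type is the set of types of its members. Flag-transitive: for every $J\subseteq I$ the group is transitive on the set of flags of type $J$. *)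

From HB Require Import structures.
From mathcomp Require Import all_boot all_order all_algebra.
Set Implicit Arguments. Unset Strict Implicit. Unset Printing Implicit Defensive.
Import GRing.Theory.
Local Open Scope ring_scope.

Section SymplecticGeometry.
Variables (F : fieldType) (vT : vectType F) (s : {biscalar vT}).

(* U^perp = { v | s u v = 0 for all u in U }; it suffices to test a basis of U.
   Each [s u] is linear, so [linfun (s u)] coincides with [s u]. *)
Definition perp (U : {vspace vT}) : {vspace vT} :=
  (\bigcap_(i < \dim U) lker (linfun (s (tnth (vbasis U) i) : vT -> F^o)))%VS.

Definition Rad (U : {vspace vT}) : {vspace vT} := (U :&: perp U)%VS.

Definition is_object_of_type (i : nat) (U : {vspace vT}) : Prop :=
  [/\ (1 <= i <= (\dim {:vT}).-1)%N, \dim U = i,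
      (U :&: Rad fullv)%VS = 0%VS & (\dim (Rad U) <= 1)%N].

Definition is_object (U : {vspace vT}) : Prop :=
  exists i, is_object_of_type i U.

Definition incident (X Y : {vspace vT}) : Prop :=
  [\/ X = Y,
      (X <= Y)%VS /\ (X :&: Rad Y)%VS = 0%VS
    | (Y <= X)%VS /\ (Y :&: Rad X)%VS = 0%VS].

Definition is_flag (P : {vspace vT} -> Prop) : Prop :=
  (forall X, P X -> is_object X) /\
  (forall X Y, P X -> P Y -> incident X Y).

Definition flag_has_type (P : {vspace vT} -> Prop) (J : nat -> Prop) : Prop :=
  forall i, J i <-> exists2 X, P X & is_object_of_type i X.

Definition in_Sp (g : 'End(vT)) : Prop :=
  [/\ lker g = 0%VS, limg g = fullv & forall u v, s (g u) (g v) = s u v].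

Definition flag_image (g : 'End(vT)) (P : {vspace vT} -> Prop) :
  {vspace vT} -> Prop := fun Y => exists2 X, P X & Y = (g @: X)%VS.

Definition Sp_flag_transitive : Prop :=
  forall J : nat -> Prop,
    (forall i, J i -> (1 <= i <= (\dim {:vT}).-1)%N) ->
    forall P Q, is_flag P -> flag_has_type P J ->
                is_flag Q -> flag_has_type Q J ->
    exists g, in_Sp g /\ (forall Y, flag_image g P Y <-> Q Y).

End SymplecticGeometry.

From HB Require Import structures.
From mathcomp Require Import all_boot all_order all_algebra zify ring.
From Stdlib Require Import Classical.
Set Implicit Arguments. Unset Strict Implicit. Unset Printing Implicit Defensive.
Import GRing.Theory passmx.
Local Open Scope ring_scope.

(* Every flag is adapted to a hyperbolic basis e_1, f_1, e_2, f_2, ... of V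
   (s e_k f_k = 1, all other pairings 0, plus one final radical vector when n
   is odd): each member of dimension d is spanned by the first d basis vectors.
   Such a basis is built through the members of the flag in increasing
   dimension. When the span W of the vectors chosen so far lies in the next
   member Z and meets Rad Z trivially, the next vector is a partner in Z of the
   unpaired last vector of W if there is one, and otherwise any vector of Z
   outside W + Rad Z (which exists unless Z = W + Rad Z is one dimension larger
   than W); a symplectic Gram-Schmidt step then makes it orthogonal to the
   complete pairs. All hyperbolic bases have the same Gram matrix, so the
   linear map between two of them lies in Sp(V); it maps a flag onto any flag
   of the same type, since the members of a flag are determined by their
   dimensions. *)

Lemma double_half_lt_odd n : odd n -> (n./2.*2 < n)%N.
Proof. by move=> odd_n; rewrite odd_halfK // ltn_predL odd_gt0. Qed.

Section HyperbolicGram.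
Variable F : fieldType.

(* Gram matrix of e_1, f_1, e_2, f_2, ...: the entries at (2k, 2k+1) and
   (2k+1, 2k) are 1 and -1, all others are 0. *)
Definition hgram (i j : nat) : F := (i./2 == j./2)%:R * ((odd j)%:R - (odd i)%:R).

Lemma hgramN i j : hgram j i = - hgram i j.
Proof. by rewrite /hgram eq_sym -mulrN opprB. Qed.

Lemma hgramii i : hgram i i = 0.
Proof. by rewrite /hgram subrr mulr0. Qed.

Lemma hgram_pair k : hgram k.*2 k.*2.+1 = 1.
Proof. by rewrite /hgram /= uphalf_double doubleK eqxx odd_double subr0 mulr1. Qed.

Lemma hgram_pair_term i k (a c : F) :
  a * hgram i k.*2.+1 - c * hgram i k.*2 = (i./2 == k)%:R * (if odd i then c else a).
Proof.
rewrite /hgram /= uphalf_double doubleK odd_double.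
by case: (odd i); case: (i./2 == k); rewrite /= ?(mulr0n, mulr1n); ring.
Qed.

Lemma hgram_lt_pair i j : (i < (j./2).*2)%N -> hgram i j = 0.
Proof. by move=> lt_ij; rewrite /hgram ltn_eqF ?mul0r // ltn_half_double. Qed.

End HyperbolicGram.

Section VspaceFacts.
Variables (F : fieldType) (vT : vectType F).
Implicit Types U R Z : {vspace vT}.

Lemma free_rcons (X : seq vT) w : free (rcons X w) = (w \notin <<X>>%VS) && free X.
Proof. by rewrite -free_cons; apply/perm_free; rewrite perm_rcons. Qed.

Lemma span_rcons (X : seq vT) w : (<<rcons X w>> = <<X>> + <[w]>)%VS.
Proof. by rewrite -cats1 span_cat span_seq1. Qed.

Lemma capv_add_line_eq0 U R w :
  (U :&: R = 0)%VS -> w \notin (U + R)%VS -> ((U + <[w]>) :&: R = 0)%VS.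
Proof.
move=> UR0 w_out; apply/eqP; rewrite -subv0; apply/subvP => v.
rewrite memv_cap => /andP[/memv_addP[x Ux [y /vlineP[c ->] ->]] Rv].
have [c0|nz_c] := eqVneq c 0.
  by move: Rv; rewrite c0 scale0r addr0 -UR0 memv_cap Ux.
have : c *: w \in (U + R)%VS.
  rewrite -[c *: w](addKr x) rpredD ?rpredN //.
    exact: subvP (addvSl U R) _ Ux.
  exact: subvP (addvSr U R) _ Rv.
by rewrite rpredZeq (negPf nz_c) (negPf w_out).
Qed.

Lemma exists_new_vector U R Z : (U <= Z)%VS -> U != Z -> (\dim R <= 1)%N ->
  exists2 u, u \in Z &
    u \notin (U + R)%VS \/ u \notin U /\ \dim Z = (\dim U).+1.
Proof.
move=> UZ neUZ small_R.
have [ZUR|/subvPn[u Zu u_out]] := boolP (Z <= U + R)%VS; last by exists u => //; left.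
have /subvPn[u Zu u_out] : ~~ (Z <= U)%VS.
  by apply: contra neUZ => ZU; rewrite eqEsubv UZ.
exists u => //; right; split => //.
move: neUZ; rewrite eqEdim UZ /= -ltnNge.
by have := dimvS ZUR; have := dimv_sum_cap U R; lia.
Qed.

End VspaceFacts.

Section Orthogonality.
Variables (F : fieldType) (vT : vectType F) (s : {biscalar vT}).

Lemma perpP (U : {vspace vT}) v :
  reflect (forall u, u \in U -> s u v = 0) (v \in perp s U).
Proof.
rewrite memvE; apply: (iffP subv_bigcapP) => [perp_v u Uu | perp_v i _].
  rewrite (coord_vbasis Uu) linear_sumlz big1 // => i _.
  have := perp_v i isT; rewrite -memvE memv_ker lfunE /= (tnth_nth 0) => /eqP.
  by rewrite linearZl_LR => ->; rewrite mulr0.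
rewrite -memvE memv_ker lfunE /= perp_v // (tnth_nth 0).
by rewrite vbasis_mem // mem_nth // size_tuple.
Qed.

Lemma perpPn (U : {vspace vT}) v :
  v \notin perp s U -> exists2 u, u \in U & s u v != 0.
Proof.
move=> not_perp; apply: NNPP => no_witness; case/negP: not_perp; apply/perpP => u Uu.
by apply/eqP/negPn/negP => nz; apply: no_witness; exists u.
Qed.

Lemma RadP (U : {vspace vT}) v :
  reflect (v \in U /\ forall u, u \in U -> s u v = 0) (v \in Rad s U).
Proof. by rewrite memv_cap; apply: (iffP andP) => -[Uv /perpP]. Qed.

Lemma span_perp (X : seq vT) v :
  (forall i, (i < size X)%N -> s X`_i v = 0) -> forall u, u \in <<X>>%VS -> s u v = 0.
Proof.
move=> perp_v u Xu; rewrite (coord_span (X := in_tuple X) Xu) linear_sumlz big1 // => i _.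
by rewrite linearZl_LR perp_v ?mulr0.
Qed.

End Orthogonality.

Section Isometry.
Variables (F : fieldType) (vT : vectType F) (s : {biscalar vT}).
Local Notation n := (\dim {:vT}).

Lemma s_vecof (e : n.-tuple vT) x y :
  s (vecof e x) (vecof e y) = \sum_i \sum_j x 0 i * y 0 j * s e`_i e`_j.
Proof.
rewrite /vecof linear_sumlz; apply: eq_bigr => i _; rewrite linear_sumr.
by apply: eq_bigr => j _; rewrite linearZl_LR linearZr_LR mulrA.
Qed.

Lemma basis_map_Sp (e e' : n.-tuple vT) :
  basis_of fullv e -> basis_of fullv e' ->
  (forall i j : 'I_n, s e`_i e`_j = s e'`_i e'`_j) ->
  exists2 g, in_Sp s g & forall i : 'I_n, g e`_i = e'`_i.
Proof.
move=> e_basis e'_basis same_gram.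
pose g := hommx e e' 1%:M.
have gE v : g v = vecof e' (rVof e v) by rewrite lfunE /= /funmx mulmx1.
have ker_g : lker g = 0%VS.
  apply/eqP/lker0P => u v; rewrite !gE.
  by move/(can_inj (vecofK e'_basis))/(can_inj (rVofK e_basis)).
exists g; first split => //.
- exact/lker0_limgf/eqP.
- move=> u v; rewrite !gE s_vecof.
  rewrite -[u in RHS](rVofK e_basis) -[v in RHS](rVofK e_basis) s_vecof.
  by apply: eq_bigr => i _; apply: eq_bigr => j _; rewrite same_gram.
- by move=> i; rewrite gE rVofE // vecof_delta.
Qed.

End Isometry.

Section Flags.
Variables (F : fieldType) (vT : vectType F) (s : {biscalar vT}).
Implicit Types P Q : {vspace vT} -> Prop.

Lemma flag_dim_inj P X Y : is_flag s P -> P X -> P Y -> \dim X = \dim Y -> X = Y.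
Proof.
move=> [_ P_inc] PX PY dimXY.
have [//|[XY _]|[YX _]] := P_inc X Y PX PY; apply/eqP.
  by rewrite eqEdim XY dimXY /=.
by rewrite eq_sym eqEdim YX dimXY /=.
Qed.

Lemma flag_type_dim P Q J X : flag_has_type s P J -> flag_has_type s Q J ->
  is_flag s P -> P X -> exists2 Y, Q Y & \dim Y = \dim X.
Proof.
move=> P_J Q_J [P_obj _] PX; have [i Xi] := P_obj X PX.
have [|Y QY [_ dimY _ _]] := (Q_J i).1; first by apply/(P_J i); exists X.
by exists Y; rewrite // dimY; case: Xi.
Qed.

End Flags.

Section Hyperbolic.
Variables (F : fieldType) (vT : vectType F) (s : {biscalar vT}).
Hypothesis s_alt : forall v, s v v = 0.

Lemma s_skew u v : s u v = - s v u.
Proof.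
apply/eqP; rewrite -addr_eq0; apply/eqP.
by have := s_alt (u + v); rewrite linearDl !linearDr !s_alt add0r addr0.
Qed.

(* For odd size, the last vector is unpaired and orthogonal to all of [bs]. *)
Definition hyperbolic (bs : seq vT) :=
  forall i j, (i < size bs)%N -> (j < size bs)%N -> s bs`_i bs`_j = hgram F i j.

Lemma hyperbolic_rcons bs w : hyperbolic bs ->
  (forall i, (i < size bs)%N -> s bs`_i w = hgram F i (size bs)) ->
  hyperbolic (rcons bs w).
Proof.
move=> bs_hyp w_gram i j; rewrite size_rcons !ltnS !nth_rcons.
case: (ltngtP i (size bs)) => [lt_i|//|->] _;
  case: (ltngtP j (size bs)) => [lt_j|//|->] _.
- exact: bs_hyp.
- exact: w_gram.
- by rewrite s_skew w_gram // hgramN opprK.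
- by rewrite s_alt hgramii.
Qed.

(* Symplectic Gram-Schmidt: makes [w] orthogonal to the complete pairs of [bs]. *)
Definition hproj (bs : seq vT) w := w - \sum_(k < (size bs)./2)
  (s bs`_k.*2 w *: bs`_k.*2.+1 - s bs`_k.*2.+1 w *: bs`_k.*2).

Lemma memv_hprojB bs w : hproj bs w - w \in <<bs>>%VS.
Proof.
rewrite /hproj addrAC subrr add0r rpredN rpred_sum // => k _.
have lt_k : (k.*2.+1 < size bs)%N by rewrite -gtn_half_double.
by rewrite rpredB ?rpredZ ?memv_span ?mem_nth // ltnW.
Qed.

Lemma memv_hproj (U : {vspace vT}) bs w :
  (<<bs>> <= U)%VS -> (hproj bs w \in U) = (w \in U).
Proof.
by move=> /subvP bsU; rewrite -[hproj bs w](subrK w) rpredDl // bsU ?memv_hprojB.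
Qed.

Lemma s_hproj bs w i : hyperbolic bs -> (i < size bs)%N ->
  s bs`_i (hproj bs w) = s bs`_i w - \sum_(k < (size bs)./2)
    (i./2 == k)%:R * s (if odd i then bs`_k.*2.+1 else bs`_k.*2) w.
Proof.
move=> bs_hyp lt_i; rewrite linearBr linear_sumr; congr (_ - _).
apply: eq_bigr => k _; have lt_k : (k.*2.+1 < size bs)%N by rewrite -gtn_half_double.
by rewrite linearBr !linearZr_LR !bs_hyp ?(ltnW lt_k) // hgram_pair_term; case: (odd i).
Qed.

Lemma hproj_perp bs w i : hyperbolic bs -> (i < ((size bs)./2).*2)%N ->
  s bs`_i (hproj bs w) = 0.
Proof.
move=> bs_hyp lt_i; have lt_half : (i./2 < (size bs)./2)%N by rewrite ltn_half_double.
rewrite s_hproj //; last by rewrite (leq_trans lt_i) // halfK leq_subr.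
rewrite (bigD1 (Ordinal lt_half)) //= eqxx mul1r big1 => [|k ne_k].
  rewrite addr0; apply/eqP; rewrite subr_eq0; apply/eqP; congr (s _ w).
  by rewrite -[in LHS](odd_double_half i); case: (odd i).
by rewrite -[i./2 == k]/(Ordinal lt_half == k) eq_sym (negPf ne_k) mul0r.
Qed.

Lemma hproj_unpaired bs w : hyperbolic bs -> odd (size bs) ->
  s bs`_((size bs)./2).*2 (hproj bs w) = s bs`_((size bs)./2).*2 w.
Proof.
move=> bs_hyp odd_bs; rewrite s_hproj ?double_half_lt_odd // big1 ?subr0 // => k _.
by rewrite doubleK (gtn_eqF (ltn_ord k)) mul0r.
Qed.

Lemma hyperbolic_rcons_hproj bs u : hyperbolic bs ->
  (odd (size bs) -> s bs`_((size bs)./2).*2 u = 1) ->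
  hyperbolic (rcons bs (hproj bs u)).
Proof.
move=> bs_hyp unpaired_u; apply: hyperbolic_rcons => // i lt_i.
have [lt_i_pairs|le_i] := ltnP i ((size bs)./2).*2.
  by rewrite hproj_perp // hgram_lt_pair.
have := odd_double_half (size bs); set h := (size bs)./2.
case: (boolP (odd (size bs))) => odd_bs /= size_bs; last by lia.
have -> : i = h.*2 by lia.
by rewrite hproj_unpaired // unpaired_u // -size_bs add1n hgram_pair.
Qed.

Lemma unpaired_perp bs : hyperbolic bs -> odd (size bs) ->
  forall x, x \in <<bs>>%VS -> s x bs`_((size bs)./2).*2 = 0.
Proof.
move=> bs_hyp odd_bs; have := odd_double_half (size bs); rewrite odd_bs => size_bs.
apply: span_perp => i lt_i; rewrite bs_hyp //; last by lia.
have [lt_i_pairs|le_i] := ltnP i ((size bs)./2).*2.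
  by rewrite hgram_lt_pair // doubleK.
have -> : i = ((size bs)./2).*2 by lia.
exact: hgramii.
Qed.

Lemma exists_unpaired_partner Z bs : hyperbolic bs -> odd (size bs) -> free bs ->
  (<<bs>> <= Z)%VS -> (<<bs>> :&: Rad s Z = 0)%VS ->
  exists2 u, u \in Z &
    s bs`_((size bs)./2).*2 u = 1 /\ u \notin (<<bs>> + Rad s Z)%VS.
Proof.
move=> bs_hyp odd_bs bs_free bsZ bs_Rad; set r := bs`_((size bs)./2).*2.
have bs_r : r \in bs by rewrite mem_nth ?double_half_lt_odd.
have r_not_Rad : r \notin Rad s Z.
  apply/negP => Rad_r; have /negP := free_not0 bs_free bs_r; apply.
  by rewrite -memv0 -bs_Rad memv_cap memv_span.
have [v Zv s_vr] : exists2 v, v \in Z & s v r != 0.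
  by apply: perpPn; apply: contra r_not_Rad; rewrite memv_cap (subvP bsZ) ?memv_span.
have s_rv : s r v != 0 by rewrite s_skew oppr_eq0.
have s_ru : s r ((s r v)^-1 *: v) = 1 by rewrite linearZr_LR mulVf.
exists ((s r v)^-1 *: v); first by rewrite memvZ.
split => //; apply/negP => /memv_addP[x bs_x [y /RadP[_ Rad_y] u_eq]].
move: s_ru; rewrite u_eq linearDr s_skew unpaired_perp //.
rewrite Rad_y ?(subvP bsZ) ?memv_span //.
by rewrite oppr0 addr0 => /eqP; rewrite eq_sym oner_eq0.
Qed.

Lemma exists_next_vector Z bs : hyperbolic bs -> free bs -> (<<bs>> <= Z)%VS ->
  (<<bs>> :&: Rad s Z = 0)%VS -> <<bs>>%VS != Z -> (\dim (Rad s Z) <= 1)%N ->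
  exists2 u, u \in Z &
    (odd (size bs) -> s bs`_((size bs)./2).*2 u = 1) /\
    (u \notin (<<bs>> + Rad s Z)%VS \/ u \notin <<bs>>%VS /\ \dim Z = (size bs).+1).
Proof.
move=> bs_hyp bs_free bsZ bs_Rad ne_bs_Z small_Rad.
have [odd_bs|even_bs] := boolP (odd (size bs)).
  have [u Zu [s_ru u_out]] := exists_unpaired_partner bs_hyp odd_bs bs_free bsZ bs_Rad.
  by exists u => //; split => [_|]; last left.
rewrite -(eqP bs_free); have [u Zu u_new] := exists_new_vector bsZ ne_bs_Z small_Rad.
by exists u => //; split => // odd_bs; rewrite odd_bs in even_bs.
Qed.

Lemma hyperbolic_extend Z bs : hyperbolic bs -> free bs -> (<<bs>> <= Z)%VS ->
  (<<bs>> :&: Rad s Z = 0)%VS \/ <<bs>>%VS = Z -> (\dim (Rad s Z) <= 1)%N ->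
  exists2 cs, hyperbolic (bs ++ cs) & basis_of Z (bs ++ cs).
Proof.
have [k] := ubnP (\dim Z - size bs); elim: k bs => // k IH bs lt_k.
move=> bs_hyp bs_free bsZ bs_Rad small_Rad.
have [bs_Z|ne_bs_Z] := eqVneq <<bs>>%VS Z.
  by exists [::]; rewrite cats0 // /basis_of bs_Z eqxx.
have {}bs_Rad : (<<bs>> :&: Rad s Z = 0)%VS.
  by case: bs_Rad ne_bs_Z => // ->; rewrite eqxx.
have [u Zu [unpaired_u u_new]] :=
  exists_next_vector bs_hyp bs_free bsZ bs_Rad ne_bs_Z small_Rad.
set w := hproj bs u.
have u_notin_bs : u \notin <<bs>>%VS.
  by case: u_new => [|[] //]; apply: contra; apply: subvP; apply: addvSl.
have w_free : free (rcons bs w) by rewrite free_rcons memv_hproj // u_notin_bs.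
have wZ : (<<rcons bs w>> <= Z)%VS.
  by rewrite span_rcons subv_add bsZ -memvE memv_hproj.
have lt_k' : (\dim Z - size (rcons bs w) < k)%N.
  rewrite size_rcons; move: ne_bs_Z; rewrite eqEdim bsZ (eqP bs_free) -ltnNge.
  by lia.
have w_Rad : (<<rcons bs w>> :&: Rad s Z = 0)%VS \/ <<rcons bs w>>%VS = Z.
  case: u_new => [u_out|[_ dimZ]]; [left|right].
    by rewrite span_rcons capv_add_line_eq0 // memv_hproj // addvSl.
  by apply/eqP; rewrite eqEdim wZ (eqP w_free) size_rcons dimZ /=.
have w_hyp := hyperbolic_rcons_hproj bs_hyp unpaired_u.
have [cs cs_hyp cs_basis] := IH (rcons bs w) lt_k' w_hyp w_free wZ w_Rad small_Rad.
by exists (w :: cs); rewrite -cat_rcons.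
Qed.

Lemma flag_prefix_basis P d : is_flag s P ->
  exists2 bs, hyperbolic bs & [/\ free bs, (size bs <= d)%N,
    <<bs>>%VS = 0%VS \/ P <<bs>>%VS &
    forall X, P X -> (\dim X <= d)%N ->
      (\dim X <= size bs)%N /\ X = <<take (\dim X) bs>>%VS].
Proof.
move=> P_flag; elim: d => [|d [bs bs_hyp [bs_free bs_d bs_P bs_pref]]].
  exists [::] => [//|]; split; rewrite ?span_nil ?nil_free //; first by left.
  by move=> X _; rewrite leqn0 dimv_eq0 => /eqP ->; rewrite span_nil.
have [[X PX dimX]|no_X] := classic (exists2 X, P X & \dim X = d.+1); last first.
  exists bs => //; split => // [|Y PY]; first exact: leqW.
  rewrite leq_eqVlt ltnS => /orP[/eqP dimY|]; last exact: bs_pref.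
  by case: no_X; exists Y.
have [i [_ _ _ small_Rad]] := P_flag.1 X PX.
have [bsX bs_Rad] : (<<bs>> <= X)%VS /\ (<<bs>> :&: Rad s X = 0)%VS.
  case: bs_P => [->|P_bs]; first by rewrite sub0v cap0v.
  have dim_bs : \dim <<bs>> = size bs by apply/eqP.
  have [eq_bs|//|[Xbs _]] := P_flag.2 _ _ P_bs PX.
    by move: dimX; rewrite -eq_bs dim_bs; lia.
  by have := dimvS Xbs; rewrite dim_bs; lia.
have [cs cs_hyp cs_basis] :=
  hyperbolic_extend bs_hyp bs_free bsX (or_introl bs_Rad) small_Rad.
have size_bs_cs : size (bs ++ cs) = d.+1.
  by rewrite -dimX -(span_basis cs_basis) (eqP (basis_free cs_basis)).
exists (bs ++ cs) => //; split; rewrite ?size_bs_cs ?(span_basis cs_basis) //.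
- exact: basis_free cs_basis.
- by right.
move=> Y PY le_Y; split => //.
have [dimY|ne_dY] := eqVneq (\dim Y) d.+1.
  rewrite dimY -size_bs_cs take_size (span_basis cs_basis).
  by apply: flag_dim_inj P_flag PY PX _; rewrite dimY dimX.
have le_dY : (\dim Y <= d)%N by rewrite -ltnS ltn_neqAle ne_dY.
by have [le_Y_bs Y_pref] := bs_pref Y PY le_dY; rewrite takel_cat.
Qed.

Lemma flag_basis P : is_flag s P -> (\dim (Rad s fullv) <= 1)%N ->
  exists2 b, hyperbolic b &
    basis_of fullv b /\ forall X, P X -> X = <<take (\dim X) b>>%VS.
Proof.
move=> P_flag small_Rad.
have [bs bs_hyp [bs_free _ bs_P bs_pref]] := flag_prefix_basis (\dim {:vT}) P_flag.
have bs_Rad : (<<bs>> :&: Rad s fullv = 0)%VS.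
  by case: bs_P => [->|/P_flag.1[i []]]; rewrite ?cap0v.
have [cs cs_hyp cs_basis] :=
  hyperbolic_extend bs_hyp bs_free (subvf _) (or_introl bs_Rad) small_Rad.
exists (bs ++ cs) => //; split => // X PX.
have [le_X X_pref] := bs_pref X PX (dimvS (subvf X)).
by rewrite takel_cat.
Qed.

Lemma hyperbolic_basis_Sp b b' : hyperbolic b -> hyperbolic b' ->
  basis_of fullv b -> basis_of fullv b' -> exists2 g, in_Sp s g & map g b = b'.
Proof.
move=> b_hyp b'_hyp b_basis b'_basis.
have basis_size (X : seq vT) : basis_of fullv X -> size X == \dim {:vT}.
  by move=> X_basis; rewrite -(eqP (basis_free X_basis)) (span_basis X_basis).
have [sz sz'] := (basis_size _ b_basis, basis_size _ b'_basis).
have [|g g_Sp g_b] := @basis_map_Sp _ _ s (Tuple sz) (Tuple sz') b_basis b'_basis.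
  by move=> i j; rewrite /= b_hyp ?b'_hyp ?(eqP sz) ?(eqP sz').
exists g => //; apply: (@eq_from_nth _ 0) => [|i].
  by rewrite size_map (eqP sz) (eqP sz').
rewrite size_map (eqP sz) => lt_i.
by rewrite (nth_map 0) ?(eqP sz) // -[i]/(nat_of_ord (Ordinal lt_i)) g_b.
Qed.

End Hyperbolic.

Theorem lemma5p1 (F : fieldType) (vT : vectType F) (n : nat)
  (s : {biscalar vT}) :
  \dim {:vT} = n ->
  (forall v : vT, s v v = 0) ->
  (\dim (Rad s fullv) <= 1)%N ->
  Sp_flag_transitive s.
Proof.
move=> _ s_alt small_Rad J _ P Q P_flag P_J Q_flag Q_J.
have [b b_hyp [b_basis P_b]] := flag_basis s_alt P_flag small_Rad.
have [b' b'_hyp [b'_basis Q_b']] := flag_basis s_alt Q_flag small_Rad.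
have [g g_Sp g_b] := hyperbolic_basis_Sp b_hyp b'_hyp b_basis b'_basis.
exists g; split => // Y; split.
- case=> X PX ->; have [Y' QY' dimY'] := flag_type_dim P_J Q_J P_flag PX.
  by rewrite (P_b X PX) limg_span map_take g_b -dimY' -Q_b'.
- move=> QY; have [X PX dimX] := flag_type_dim Q_J P_J Q_flag QY.
  by exists X => //; rewrite (P_b X PX) limg_span map_take g_b dimX -Q_b'.
Qed.
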